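(* There is an absolute constant $C$ such that for every tree $T$ (in the sense of the context), every $j\in\mathcal{J}(T)$ and every $0\le t\le1$, $$|I_T(t,j)|\le (Ct)^{|T^0|/2}\prod_{v\in T^0}\langle\sigma(j,v)\rangle^{-1/2}.$$
   Context: A tree is a finite rooted tree in which every node has either zero or three children; the children of a node $v$ with three children are denoted $v_1,v_2,v_3$. $T^0$ is the set of non-terminal nodes and $T^\infty$ the set of terminal nodes. For nodes, $v<w$ means $v$ is a (strict) descendant of $w$. $\mathcal{J}(T)$ is the set of $j\in\mathbb{Z}^T$ such that for every $v\in T^0$, $j_v=j_{v_1}+j_{v_2}+j_{v_3}$ and either $j_{v_i}\neq j_v$ for all $i=1,2,3$, or $j_{v_1}=-j_{v_2}=j_{v_3}=j_v$. Let $\sigma(n_1,n_2,n_3)=(n_1+n_2+n_3)^3-n_1^3-n_2^3-n_3^3=3(n_1+n_2)(n_2+n_3)(n_3+n_1)$, and for $v\in T^0$, $\sigma(j,v)=\sigma(j_{v_1},j_{v_2},j_{v_3})$. $\langle x\rangle=(1+x^2)^{1/2}$. $\mathcal{R}(T,t)=\{s\in\mathbb{R}_+^{T^0}: 0\le s_v\le s_w\le t\text{ whenever }v<w\}$, $c(j,s)=\prod_{v\in T^0}e^{i\sigma(j,v)s_v}$, and $I_T(t,j)=\int_{\mathcal{R}(T,t)}c(j,s)\,ds$. *)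

From Stdlib Require Import Reals Lra ZArith ClassicalEpsilon.
Open Scope R_scope.

(** Ternary trees whose nodes carry an integer label: a tree T together with
    j : Z^T.  [LLeaf z] is a terminal node with j-value z; [LNode z a b c] is a
    non-terminal node v with j_v = z and children v1 = a, v2 = b, v3 = c. *)
Inductive ltree : Type :=
| LLeaf : Z -> ltree
| LNode : Z -> ltree -> ltree -> ltree -> ltree.

Definition lab (t : ltree) : Z :=
  match t with LLeaf z => z | LNode z _ _ _ => z end.

Fixpoint n_int (t : ltree) : nat :=
  match t with
  | LLeaf _ => 0
  | LNode _ a b c => S (n_int a + n_int b + n_int c)
  end.

Definition sigma (n1 n2 n3 : Z) : Z :=
  ((n1 + n2 + n3) ^ 3 - n1 ^ 3 - n2 ^ 3 - n3 ^ 3)%Z.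

Fixpoint inJ (t : ltree) : Prop :=
  match t with
  | LLeaf _ => True
  | LNode z a b c =>
      z = (lab a + lab b + lab c)%Z /\
      ((lab a <> z /\ lab b <> z /\ lab c <> z) \/
       (lab a = z /\ lab b = (- z)%Z /\ lab c = z)) /\
      inJ a /\ inJ b /\ inJ c
  end.

Definition jbr (x : R) : R := sqrt (1 + x ^ 2).

Fixpoint sigma_weight (t : ltree) : R :=
  match t with
  | LLeaf _ => 1
  | LNode _ a b c =>
      / sqrt (jbr (IZR (sigma (lab a) (lab b) (lab c))))
      * sigma_weight a * sigma_weight b * sigma_weight c
  end.

Definition Cx := (R * R)%type.
Definition Cmul (x y : Cx) : Cx :=
  (fst x * fst y - snd x * snd y, fst x * snd y + snd x * fst y).
Definition Cexpi (th : R) : Cx := (cos th, sin th).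
Definition Cmod (x : Cx) : R := sqrt (fst x ^ 2 + snd x ^ 2).

(** Total version of the Riemann integral: the Riemann integral of f over [a,b]
    when f is Riemann integrable there (its value does not depend on the
    integrability proof), and 0 otherwise (never used: all integrands below
    are continuous). *)
Definition Rint (f : R -> R) (a b : R) : R :=
  match excluded_middle_informative
          (exists pr : Riemann_integrable f a b, True) with
  | left h => RiemannInt (proj1_sig (constructive_indefinite_description _ h))
  | right _ => 0
  end.

Definition Cint (f : R -> Cx) (a b : R) : Cx :=
  (Rint (fun s => fst (f s)) a b, Rint (fun s => snd (f s)) a b).

(** I_T(t,j) = int_{R(T,t)} prod_{v in T^0} e^{i sigma(j,v) s_v} ds, computed
    as the iterated integral over the region
    R(T,t) = {0 <= s_v <= s_w <= t whenever v < w}: integrating first over the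
    root variable s_r in [0,t], the remaining region is the product of the
    regions R(T_{r_i}, s_r) of the three subtrees, so
    I_T(t,j) = int_0^t e^{i sigma(j,r) s} prod_i I_{T_{r_i}}(s,j) ds,
    with I = 1 for the tree with no non-terminal node (empty integral). *)
Fixpoint I_T (t : ltree) (tt : R) : Cx :=
  match t with
  | LLeaf _ => (1, 0)
  | LNode _ a b c =>
      Cint (fun s => Cmul (Cexpi (IZR (sigma (lab a) (lab b) (lab c)) * s))
                          (Cmul (I_T a s) (Cmul (I_T b s) (I_T c s))))
           0 tt
  end.

(* Unfolding the root, I_T(t) = int_0^t e^{i sigma s} F(s) ds with F the product of the
   functions of the three subtrees.  One proves by induction on T that, with n = |T^0| and
   A = D^n prod_v <sigma(j,v)>^{-1/2}, |I_T(s)| <= A s^{n/2} and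
   |I_T(s') - I_T(s)| <= A (s' - s)^{1/2} s'^{(n-1)/2}.  These bounds pass to products of three
   functions, and integrating against e^{i sigma s} costs a factor (s' - s)^{1/2} and gains
   <sigma>^{-1/2}: if (s' - s)|sigma| <= 2 pi the trivial bound suffices, and otherwise averaging
   the integral with its translate by the half period p = pi/|sigma| replaces F(u) by
   F(u) - F(u + p) = O(p^{1/2}), with p^{1/2} <= 3 <sigma>^{-1/2}. *)

From Pilot Require Import Defs.
From Stdlib Require Import Reals ZArith Lra Lia ClassicalEpsilon.
From Coquelicot Require Import Coquelicot.
Import Defs.
Open Scope R_scope.

Notation CRInt := (@RInt C_R_CompleteNormedModule).

Lemma Cmod_norm_R (x : C) : Cmod x = @norm R_AbsRing C_R_NormedModule x.
Proof. apply Cmod_norm. Qed.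

Lemma Cmod_nonneg (x : C) : 0 <= Cmod x.
Proof. apply Cmod_ge_0. Qed.

Lemma Cmod_Cplus_le (x y : C) : Cmod (Cplus x y) <= Cmod x + Cmod y.
Proof. apply Cmod_triangle. Qed.

Lemma Cmod_Cmul (x y : C) : Cmod (Cmul x y) = Cmod x * Cmod y.
Proof. apply Cmod_mult. Qed.

Lemma Cmod_Copp (x : C) : Cmod (Copp x) = Cmod x.
Proof. apply Cmod_opp. Qed.

Lemma Rint_RInt (f : R -> R) (a b : R) : ex_RInt f a b -> Rint f a b = RInt f a b.
Proof.
  intros Hf; unfold Rint.
  destruct excluded_middle_informative as [h | h].
  - symmetry; apply RInt_Reals.
  - exfalso; apply h; exists (ex_RInt_Reals_0 _ _ _ Hf); trivial.
Qed.

Definition rcontinuous (f : R -> R) : Prop := forall x, continuous f x.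

Definition ccontinuous (f : R -> C) : Prop :=
  rcontinuous (fun s => fst (f s)) /\ rcontinuous (fun s => snd (f s)).

Lemma ex_RInt_rcontinuous (f : R -> R) (a b : R) : rcontinuous f -> ex_RInt f a b.
Proof. intros Hf; apply (ex_RInt_continuous (V := R_CompleteNormedModule)); auto. Qed.

Lemma rcontinuous_RInt (f : R -> R) : rcontinuous f -> rcontinuous (fun t => RInt f 0 t).
Proof.
  intros Hf x.
  apply (ex_derive_continuous (K := R_AbsRing) (V := R_NormedModule)).
  exists (f x); apply (is_derive_RInt f (fun t => RInt f 0 t) 0 x); auto.
  apply filter_forall; intros y.
  apply (RInt_correct (V := R_CompleteNormedModule)), ex_RInt_rcontinuous, Hf.
Qed.

Lemma ccontinuous_Cmul (f g : R -> C) :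
  ccontinuous f -> ccontinuous g -> ccontinuous (fun s => Cmul (f s) (g s)).
Proof.
  intros [f1 f2] [g1 g2]; split; intros x; cbn.
  - apply (continuous_minus (V := R_NormedModule));
      apply (continuous_mult (K := R_AbsRing)); auto.
  - apply (continuous_plus (V := R_NormedModule));
      apply (continuous_mult (K := R_AbsRing)); auto.
Qed.

Lemma ccontinuous_Cplus (f g : R -> C) :
  ccontinuous f -> ccontinuous g -> ccontinuous (fun s => Cplus (f s) (g s)).
Proof.
  intros [f1 f2] [g1 g2]; split; intros x; cbn;
    apply (continuous_plus (V := R_NormedModule)); auto.
Qed.

Lemma ccontinuous_Cexpi_scale (a : R) : ccontinuous (fun s => Cexpi (a * s)).
Proof.
  assert (Hlin : forall x, continuous (fun s => a * s) x).
  { intros x; apply (continuous_mult (K := R_AbsRing) (fun _ => a) (fun s => s));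
      [apply continuous_const | apply continuous_id]. }
  split; intros x; cbn; [apply continuous_cos_comp | apply continuous_sin_comp]; auto.
Qed.

Lemma ccontinuous_shift (f : R -> C) (p : R) :
  ccontinuous f -> ccontinuous (fun u => f (u + p)).
Proof.
  assert (Hshift : forall x, continuous (fun u => u + p) x).
  { intros x; apply (continuous_plus (V := R_NormedModule) (fun u => u) (fun _ => p));
      [apply continuous_id | apply continuous_const]. }
  intros [f1 f2]; split; intros x;
    apply (continuous_comp (fun u => u + p) (fun u => _ (f u))); auto.
Qed.

Lemma CRInt_pair (f : R -> C) (a b : R) : ccontinuous f ->
  CRInt f a b = (RInt (fun s => fst (f s)) a b, RInt (fun s => snd (f s)) a b).
Proof.
  intros [f1 f2]; apply is_RInt_unique.
  apply (is_RInt_fct_extend_pair (U := R_NormedModule) (V := R_NormedModule));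
    apply (RInt_correct (V := R_CompleteNormedModule)), ex_RInt_rcontinuous; auto.
Qed.

Lemma ex_CRInt (f : R -> C) (a b : R) :
  ccontinuous f -> ex_RInt (V := C_R_CompleteNormedModule) f a b.
Proof.
  intros [f1 f2].
  apply (ex_RInt_fct_extend_pair (U := R_NormedModule) (V := R_NormedModule));
    apply ex_RInt_rcontinuous; auto.
Qed.

Lemma Cint_CRInt (f : R -> C) (a b : R) : ccontinuous f -> Cint f a b = CRInt f a b.
Proof.
  intros Hf; rewrite CRInt_pair by exact Hf; destruct Hf as [f1 f2].
  unfold Cint; rewrite !Rint_RInt by (apply ex_RInt_rcontinuous; auto); reflexivity.
Qed.

Lemma ccontinuous_CRInt (f : R -> C) : ccontinuous f -> ccontinuous (fun t => CRInt f 0 t).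
Proof.
  intros Hf; assert (E := fun t => CRInt_pair f 0 t Hf); destruct Hf as [f1 f2].
  split; intros x; eapply continuous_ext; try (intros t; rewrite E; reflexivity);
    apply rcontinuous_RInt; auto.
Qed.

Definition oscillatory (xi : R) (F : R -> C) (u : R) : C := Cmul (Cexpi (xi * u)) (F u).

Lemma ccontinuous_oscillatory (xi : R) (F : R -> C) :
  ccontinuous F -> ccontinuous (oscillatory xi F).
Proof. intros HF; apply ccontinuous_Cmul; [apply ccontinuous_Cexpi_scale | exact HF]. Qed.

Lemma CRInt_norm_le (G : R -> C) (a b M : R) : ccontinuous G -> a <= b ->
  (forall u, a <= u <= b -> Cmod (G u) <= M) -> Cmod (CRInt G a b) <= (b - a) * M.
Proof.
  intros HG hab HM; rewrite Cmod_norm_R.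
  apply (norm_RInt_le_const (V := C_R_NormedModule) G); auto.
  - intros u hu; rewrite <- Cmod_norm_R; auto.
  - apply (RInt_correct (V := C_R_CompleteNormedModule)), ex_CRInt, HG.
Qed.

Lemma CRInt_Chasles (G : R -> C) (a b c : R) :
  ccontinuous G -> Cplus (CRInt G a b) (CRInt G b c) = CRInt G a c.
Proof. intros HG; apply (RInt_Chasles (V := C_R_CompleteNormedModule)); apply ex_CRInt, HG. Qed.

Lemma CRInt_minus (G : R -> C) (a b : R) :
  ccontinuous G -> Cminus (CRInt G 0 b) (CRInt G 0 a) = CRInt G a b.
Proof.
  intros HG; rewrite <- (CRInt_Chasles G 0 a b HG).
  destruct (CRInt G 0 a), (CRInt G a b); unfold Cminus, Cplus, Copp; cbn; f_equal; ring.
Qed.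

Lemma CRInt_shift (G : R -> C) (p a b : R) :
  ccontinuous G -> CRInt (fun u => G (u + p)) a b = CRInt G (a + p) (b + p).
Proof.
  intros HG.
  replace (a + p) with (1 * a + p) by ring; replace (b + p) with (1 * b + p) by ring.
  rewrite <- RInt_comp_lin by apply ex_CRInt, HG.
  apply RInt_ext; intros u _; rewrite Rmult_1_l; symmetry; apply (scal_one (V := C_R_ModuleSpace)).
Qed.

Lemma Cmod_double (x : C) : Cmod (Cplus x x) = 2 * Cmod x.
Proof.
  replace (Cplus x x) with (Cmult (RtoC 2) x)
    by (destruct x; unfold Cplus, Cmult, RtoC; cbn; f_equal; ring).
  rewrite Cmod_mult, Cmod_R, Rabs_pos_eq by lra; reflexivity.
Qed.

(* Twice the integral is the integral of [G u + G (u + p)] over [s, s' - p] plus two end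
   pieces of length [p]. *)
Lemma CRInt_translate_bound (G : R -> C) (s s' p M K : R) :
  ccontinuous G -> 0 < p -> s + 2 * p <= s' ->
  (forall u, s <= u <= s' -> Cmod (G u) <= M) ->
  (forall u, s <= u <= s' - p -> Cmod (Cplus (G u) (G (u + p))) <= K) ->
  Cmod (CRInt G s s') <= ((s' - s - p) * K + 2 * p * M) / 2.
Proof.
  intros HG hp hs HM HK.
  set (B := CRInt (fun u => Cplus (G u) (G (u + p))) s (s' - p)).
  assert (Hfold : Cplus (CRInt G s s') (CRInt G s s')
               = Cplus (Cplus B (CRInt G s (s + p))) (CRInt G (s' - p) s')).
  { assert (HB : B = Cplus (CRInt G s (s' - p)) (CRInt G (s + p) s')).
    { replace (CRInt G (s + p) s') with (CRInt (fun u => G (u + p)) s (s' - p))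
        by (rewrite CRInt_shift by exact HG; f_equal; ring).
      apply (RInt_plus (V := C_R_CompleteNormedModule)); apply ex_CRInt;
        [exact HG | apply ccontinuous_shift, HG]. }
    pose proof (CRInt_Chasles G s (s' - p) s' HG) as E1.
    pose proof (CRInt_Chasles G s (s + p) s' HG) as E2.
    rewrite HB; revert E1 E2.
    destruct (CRInt G s s'), (CRInt G s (s' - p)), (CRInt G (s' - p) s'),
      (CRInt G s (s + p)), (CRInt G (s + p) s').
    unfold Cplus; cbn; intros E1 E2; injection E1; injection E2; intros; f_equal; lra. }
  assert (HB : Cmod B <= (s' - p - s) * K).
  { apply CRInt_norm_le; [| lra | auto].
    apply ccontinuous_Cplus; [| apply ccontinuous_shift]; exact HG. }
  assert (HP1 : Cmod (CRInt G s (s + p)) <= (s + p - s) * M).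
  { apply CRInt_norm_le; [exact HG | lra |]; intros u hu; apply HM; lra. }
  assert (HP2 : Cmod (CRInt G (s' - p) s') <= (s' - (s' - p)) * M).
  { apply CRInt_norm_le; [exact HG | lra |]; intros u hu; apply HM; lra. }
  assert (Htri := Cmod_Cplus_le (Cplus B (CRInt G s (s + p))) (CRInt G (s' - p) s')).
  assert (Htri' := Cmod_Cplus_le B (CRInt G s (s + p))).
  rewrite <- Hfold, Cmod_double in Htri.
  lra.
Qed.

Definition weight (xi : R) : R := / sqrt (jbr xi).

Lemma weight_pos (xi : R) : 0 < weight xi.
Proof. apply Rinv_0_lt_compat, sqrt_lt_R0, sqrt_lt_R0; nra. Qed.

(* [weight xi] = (1 + xi^2)^(-1/4), hence the fourth power. *)
Lemma sqrt_le_weight (xi x c : R) :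
  0 <= x -> 0 <= c -> x ^ 2 * (1 + xi ^ 2) <= c ^ 4 -> sqrt x <= c * weight xi.
Proof.
  intros Hx Hc Hxc.
  assert (Hj : 0 < jbr xi) by (apply sqrt_lt_R0; nra).
  assert (Hxj : x * jbr xi <= c ^ 2).
  { unfold jbr; rewrite <- (sqrt_pow2 x) at 1 by exact Hx.
    rewrite <- sqrt_mult by nra; rewrite <- (sqrt_pow2 (c ^ 2)) by nra.
    apply sqrt_le_1_alt; replace ((c ^ 2) ^ 2) with (c ^ 4) by ring; exact Hxc. }
  unfold weight; apply (Rmult_le_reg_r (sqrt (jbr xi))); [apply sqrt_lt_R0, Hj |].
  rewrite Rmult_assoc, Rinv_l, Rmult_1_r by (apply Rgt_not_eq, sqrt_lt_R0, Hj).
  rewrite <- sqrt_mult by lra; rewrite <- (sqrt_pow2 c) by exact Hc.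
  apply sqrt_le_1_alt; lra.
Qed.

Lemma Cmod_Cexpi (th : R) : Cmod (Cexpi th) = 1.
Proof.
  unfold Cmod, Cexpi; cbn [fst snd]; rewrite <- sqrt_1; f_equal.
  pose proof (sin2_cos2 th); unfold Rsqr in *; lra.
Qed.

Lemma Cmod_oscillatory (xi : R) (F : R -> C) (u : R) :
  Cmod (oscillatory xi F u) = Cmod (F u).
Proof. unfold oscillatory; rewrite Cmod_Cmul, Cmod_Cexpi; ring. Qed.

(* [PI / |xi|] is a half period of [u |-> e^{i xi u}]. *)
Lemma oscillatory_half_period (xi : R) (F : R -> C) (u : R) : xi <> 0 ->
  Cmod (Cplus (oscillatory xi F u) (oscillatory xi F (u + PI / Rabs xi)))
  = Cmod (Cminus (F (u + PI / Rabs xi)) (F u)).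
Proof.
  intros Hxi; unfold oscillatory.
  assert (Hshift : xi * (u + PI / Rabs xi) = xi * u + PI \/ xi * (u + PI / Rabs xi) = xi * u - PI).
  { unfold Rabs; destruct (Rcase_abs xi); [right | left]; field; intro; apply Hxi; lra. }
  assert (Hexp : Cexpi (xi * (u + PI / Rabs xi)) = Copp (Cexpi (xi * u))).
  { unfold Cexpi, Copp; cbn; destruct Hshift as [-> | ->].
    - rewrite neg_cos, neg_sin; reflexivity.
    - pose proof (neg_cos (xi * u - PI)); pose proof (neg_sin (xi * u - PI)).
      replace (xi * u - PI + PI) with (xi * u) in * by ring; f_equal; lra. }
  rewrite Hexp.
  replace (Cplus (Cmul (Cexpi (xi * u)) (F u))
                 (Cmul (Copp (Cexpi (xi * u))) (F (u + PI / Rabs xi))))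
    with (Cmul (Copp (Cexpi (xi * u))) (Cminus (F (u + PI / Rabs xi)) (F u)))
    by (unfold Cmul, Cplus, Cminus, Copp; cbn; f_equal; ring).
  rewrite Cmod_Cmul, Cmod_Copp, Cmod_Cexpi; ring.
Qed.

(* Either the interval is shorter than a period of [e^{i xi u}] and the trivial bound
   wins, or the integral is averaged with its translate by a half period. *)
Lemma oscillatory_integral_bound (F : R -> C) (xi s s' M K : R) :
  ccontinuous F -> s <= s' -> s' - s <= 1 -> 0 <= M -> 0 <= K ->
  (forall u, s <= u <= s' -> Cmod (F u) <= M) ->
  (forall u v, s <= u <= v -> v <= s' -> Cmod (Cminus (F v) (F u)) <= K * sqrt (v - u)) ->
  Cmod (CRInt (oscillatory xi F) s s')
    <= 3 * weight xi * sqrt (s' - s) * (M + sqrt (s' - s) * K).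
Proof.
  intros HF Hs Hh HM0 HK0 HM HK.
  assert (HG := ccontinuous_oscillatory xi F HF).
  assert (HGM : forall u, s <= u <= s' -> Cmod (oscillatory xi F u) <= M).
  { intros u hu; rewrite Cmod_oscillatory; auto. }
  set (h := s' - s) in *.
  assert (Hh0 : 0 <= h) by (unfold h; lra).
  assert (Hw := weight_pos xi).
  assert (Hsh := sqrt_pos h).
  assert (Hsh2 : sqrt h * sqrt h = h) by (apply sqrt_sqrt; lra).
  assert (HPI := PI_RGT_0); assert (HPI4 := PI_4).
  assert (Hxi2 : xi ^ 2 = Rabs xi * Rabs xi) by (rewrite <- (pow2_abs xi); ring).
  destruct (Rle_lt_dec (h * Rabs xi) (2 * PI)) as [Hshort | Hlong].
  - assert (Hsqrt : sqrt h <= 3 * weight xi).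
    { apply sqrt_le_weight; [lra | lra |].
      assert (0 <= h * Rabs xi) by (apply Rmult_le_pos; [lra | apply Rabs_pos]).
      replace (h ^ 2 * (1 + xi ^ 2)) with (h * h + (h * Rabs xi) * (h * Rabs xi))
        by (rewrite Hxi2; ring).
      nra. }
    eapply Rle_trans; [apply CRInt_norm_le; eauto |]; fold h.
    assert (h * M <= 3 * weight xi * sqrt h * M).
    { replace (h * M) with (sqrt h * sqrt h * M) by (rewrite Hsh2; reflexivity).
      apply Rmult_le_compat_r; [lra |]; apply Rmult_le_compat_r; lra. }
    assert (0 <= weight xi * sqrt h * sqrt h * K) by (repeat apply Rmult_le_pos; lra).
    nra.
  - assert (Hxi_abs : 2 * PI < Rabs xi) by nra.
    assert (Hxi : xi <> 0) by (intro; subst xi; rewrite Rabs_R0 in Hxi_abs; lra).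
    set (p := PI / Rabs xi).
    assert (Hp : p * Rabs xi = PI) by (unfold p; field; lra).
    assert (Hp0 : 0 < p) by (unfold p; apply Rdiv_lt_0_compat; lra).
    assert (Hph : 2 * p < h) by nra.
    assert (Hsp := sqrt_pos p).
    assert (Hsp2 : sqrt p * sqrt p = p) by (apply sqrt_sqrt; lra).
    assert (Hsqrt : sqrt p <= 3 * weight xi).
    { apply sqrt_le_weight; [lra | lra |].
      replace (p ^ 2 * (1 + xi ^ 2)) with (p * p + (p * Rabs xi) * (p * Rabs xi))
        by (rewrite Hxi2; ring).
      rewrite Hp; nra. }
    assert (Hpsh : p <= sqrt p * sqrt h).
    { rewrite <- Hsp2 at 1; apply Rmult_le_compat_l; [lra |]; apply sqrt_le_1_alt; lra. }
    eapply Rle_trans.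
    { apply (CRInt_translate_bound _ s s' p M (K * sqrt p)); auto; [unfold h in Hph; lra |].
      intros u hu; unfold p; rewrite oscillatory_half_period by exact Hxi.
      fold p; replace (sqrt p) with (sqrt (u + p - u)) by (f_equal; ring); apply HK; lra. }
    fold h.
    assert (HKp : K * sqrt p <= K * (3 * weight xi)) by (apply Rmult_le_compat_l; lra).
    assert (0 <= K * sqrt p) by (apply Rmult_le_pos; lra).
    assert ((h - p) * (K * sqrt p) <= h * (K * (3 * weight xi))) by nra.
    assert (p * M <= 3 * weight xi * sqrt h * M).
    { apply Rmult_le_compat_r; [lra |]; eapply Rle_trans; [exact Hpsh |]; nra. }
    assert (E : 3 * weight xi * sqrt h * (sqrt h * K) = 3 * weight xi * K * (sqrt h * sqrt h))
      by ring.
    rewrite Hsh2 in E.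
    assert (0 <= weight xi * K * h) by (repeat apply Rmult_le_pos; lra).
    nra.
Qed.

Definition regular (f : R -> C) (n : nat) (A : R) : Prop :=
  (forall s, 0 <= s <= 1 -> Cmod (f s) <= A * sqrt s ^ n) /\
  (forall s s', 0 <= s <= s' -> s' <= 1 ->
     Cmod (Cminus (f s') (f s)) <= A * sqrt (s' - s) * sqrt s' ^ pred n).

Lemma regular_ext (f g : R -> C) (n : nat) (A : R) :
  (forall t, f t = g t) -> regular f n A -> regular g n A.
Proof.
  intros E [Hs Hd]; split; intros *; rewrite <- ?E; [apply Hs | apply Hd].
Qed.

Lemma regular_nonneg (f : R -> C) (n : nat) (A : R) : regular f n A -> 0 <= A.
Proof.
  intros [Hs _]; specialize (Hs 1 ltac:(lra)).
  rewrite sqrt_1, pow1, Rmult_1_r in Hs; pose proof (Cmod_nonneg (f 1)); lra.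
Qed.

Lemma pow_le_pow_le_1 (r : R) (m n : nat) : 0 <= r <= 1 -> (m <= n)%nat -> r ^ n <= r ^ m.
Proof.
  intros Hr Hmn; induction Hmn as [| n Hmn IH]; [lra |].
  simpl; assert (0 <= r ^ n) by (apply pow_le; lra); nra.
Qed.

Lemma regular_le_at (f : R -> C) (n : nat) (A u s' : R) :
  regular f n A -> 0 <= u <= s' -> s' <= 1 -> Cmod (f u) <= A * sqrt s' ^ n.
Proof.
  intros Hf Hu Hs'; pose proof (regular_nonneg _ _ _ Hf) as HA; destruct Hf as [Hs _].
  eapply Rle_trans; [apply Hs; lra |]; apply Rmult_le_compat_l; [exact HA |].
  apply pow_incr; split; [apply sqrt_pos | apply sqrt_le_1_alt; lra].
Qed.

Lemma regular_increment_le (f : R -> C) (n : nat) (A u v s' : R) :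
  regular f n A -> 0 <= u <= v -> v <= s' -> s' <= 1 ->
  Cmod (Cminus (f v) (f u)) <= A * sqrt (v - u) * sqrt s' ^ pred n.
Proof.
  intros Hf Huv Hv Hs'; pose proof (regular_nonneg _ _ _ Hf) as HA; destruct Hf as [_ Hd].
  eapply Rle_trans; [apply Hd; lra |]; apply Rmult_le_compat_l.
  - apply Rmult_le_pos; [exact HA | apply sqrt_pos].
  - apply pow_incr; split; [apply sqrt_pos | apply sqrt_le_1_alt; lra].
Qed.

Lemma Cmod_Cmul3_le (x y z : C) (X Y Z : R) :
  Cmod x <= X -> Cmod y <= Y -> Cmod z <= Z -> Cmod (Cmul x (Cmul y z)) <= X * (Y * Z).
Proof.
  intros Hx Hy Hz; rewrite !Cmod_Cmul.
  pose proof (Cmod_nonneg x); pose proof (Cmod_nonneg y); pose proof (Cmod_nonneg z).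
  apply Rmult_le_compat; try apply Rmult_le_compat; try apply Rmult_le_pos; lra.
Qed.

Lemma Cmul3_Cminus (x y z x' y' z' : C) :
  Cminus (Cmul x' (Cmul y' z')) (Cmul x (Cmul y z)) =
  Cplus (Cmul (Cminus x' x) (Cmul y' z'))
        (Cplus (Cmul (Cminus y' y) (Cmul x z')) (Cmul (Cminus z' z) (Cmul x y))).
Proof. unfold Cminus, Cplus, Copp, Cmul; cbn; f_equal; ring. Qed.

Section TripleProduct.

Variables (f g h : R -> C) (l m n : nat) (A B C' : R).
Hypotheses (Hf : regular f l A) (Hg : regular g m B) (Hh : regular h n C').

Lemma triple_le (s : R) : 0 <= s <= 1 ->
  Cmod (Cmul (f s) (Cmul (g s) (h s))) <= A * B * C' * sqrt s ^ (l + m + n).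
Proof.
  intros Hs; eapply Rle_trans.
  { apply Cmod_Cmul3_le; [apply (regular_le_at f l A s s) | apply (regular_le_at g m B s s)
                          | apply (regular_le_at h n C' s s)]; auto; lra. }
  right; rewrite !pow_add; ring.
Qed.

Lemma triple_increment_le (s s' : R) : 0 <= s <= s' -> s' <= 1 ->
  Cmod (Cminus (Cmul (f s') (Cmul (g s') (h s'))) (Cmul (f s) (Cmul (g s) (h s))))
    <= 3 * (A * B * C' * sqrt (s' - s) * sqrt s' ^ pred (l + m + n)).
Proof.
  intros Hs Hs'.
  pose proof (regular_nonneg _ _ _ Hf) as HA; pose proof (regular_nonneg _ _ _ Hg) as HB;
    pose proof (regular_nonneg _ _ _ Hh) as HC.
  set (r := sqrt s'); set (q := sqrt (s' - s)).
  assert (Hr : 0 <= r <= 1).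
  { split; [apply sqrt_pos |]; unfold r; rewrite <- sqrt_1; apply sqrt_le_1_alt; lra. }
  assert (X0 : 0 <= A * B * C' * q) by (repeat apply Rmult_le_pos; auto; apply sqrt_pos).
  (* Each term of the product rule carries a power of [r] at least [pred (l + m + n)]. *)
  assert (Hpow : forall k, (pred (l + m + n) <= k)%nat ->
            A * B * C' * q * r ^ k <= A * B * C' * q * r ^ pred (l + m + n)).
  { intros k Hk; apply Rmult_le_compat_l; [exact X0 | apply pow_le_pow_le_1; auto]. }
  rewrite Cmul3_Cminus.
  eapply Rle_trans; [apply Cmod_Cplus_le |].
  eapply Rle_trans; [apply Rplus_le_compat_l, Cmod_Cplus_le |].
  assert (T1 : Cmod (Cmul (Cminus (f s') (f s)) (Cmul (g s') (h s')))
               <= A * B * C' * q * r ^ pred (l + m + n)).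
  { eapply Rle_trans.
    { apply Cmod_Cmul3_le; [apply (regular_increment_le f l A s s' s') |
        apply (regular_le_at g m B s' s') | apply (regular_le_at h n C' s' s')]; auto; lra. }
    eapply Rle_trans; [| apply (Hpow (pred l + m + n)%nat); lia].
    right; fold r q; rewrite !pow_add; ring. }
  assert (T2 : Cmod (Cmul (Cminus (g s') (g s)) (Cmul (f s) (h s')))
               <= A * B * C' * q * r ^ pred (l + m + n)).
  { eapply Rle_trans.
    { apply Cmod_Cmul3_le; [apply (regular_increment_le g m B s s' s') |
        apply (regular_le_at f l A s s') | apply (regular_le_at h n C' s' s')]; auto; lra. }
    eapply Rle_trans; [| apply (Hpow (l + pred m + n)%nat); lia].
    right; fold r q; rewrite !pow_add; ring. }
  assert (T3 : Cmod (Cmul (Cminus (h s') (h s)) (Cmul (f s) (g s)))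
               <= A * B * C' * q * r ^ pred (l + m + n)).
  { eapply Rle_trans.
    { apply Cmod_Cmul3_le; [apply (regular_increment_le h n C' s s' s') |
        apply (regular_le_at f l A s s') | apply (regular_le_at g m B s s')]; auto; lra. }
    eapply Rle_trans; [| apply (Hpow (l + m + pred n)%nat); lia].
    right; fold r q; rewrite !pow_add; ring. }
  fold r q; lra.
Qed.

End TripleProduct.

Lemma regular_triple (f g h : R -> C) (l m n : nat) (A B C' : R) :
  regular f l A -> regular g m B -> regular h n C' ->
  regular (fun u => Cmul (f u) (Cmul (g u) (h u))) (l + m + n) (3 * A * B * C').
Proof.
  intros Hf Hg Hh.
  assert (HABC : 0 <= A * B * C').
  { repeat apply Rmult_le_pos; eapply regular_nonneg; eassumption. }
  split.
  - intros s Hs; eapply Rle_trans; [apply (triple_le f g h l m n A B C'); auto |].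
    assert (0 <= A * B * C' * sqrt s ^ (l + m + n))
      by (apply Rmult_le_pos; [exact HABC | apply pow_le, sqrt_pos]).
    rewrite !Rmult_assoc in *; lra.
  - intros s s' Hs Hs'; eapply Rle_trans; [apply (triple_increment_le f g h l m n A B C'); auto |].
    right; ring.
Qed.

Lemma sqrt_mul_pow_pred_le (h s' : R) (m : nat) :
  0 <= h <= s' -> s' <= 1 -> sqrt h * sqrt s' ^ pred m <= sqrt s' ^ m.
Proof.
  intros Hh Hs'; assert (Hsh : sqrt h <= sqrt s') by (apply sqrt_le_1_alt; lra).
  destruct m as [| m]; simpl.
  - rewrite Rmult_1_r, <- sqrt_1; apply sqrt_le_1_alt; lra.
  - apply Rmult_le_compat_r; [apply pow_le, sqrt_pos | exact Hsh].
Qed.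

Lemma regular_oscillatory_integral (F : R -> C) (xi : R) (m : nat) (A : R) :
  ccontinuous F -> regular F m A ->
  regular (fun t => CRInt (oscillatory xi F) 0 t) (S m) (6 * weight xi * A).
Proof.
  intros HF HFr; pose proof (regular_nonneg _ _ _ HFr) as HA.
  assert (Hw := weight_pos xi).
  assert (Hinc : forall s s', 0 <= s <= s' -> s' <= 1 ->
    Cmod (Cminus (CRInt (oscillatory xi F) 0 s') (CRInt (oscillatory xi F) 0 s))
      <= 6 * weight xi * A * sqrt (s' - s) * sqrt s' ^ m).
  { intros s s' Hs Hs'.
    rewrite CRInt_minus by (apply ccontinuous_oscillatory, HF).
    assert (Hr := pow_le (sqrt s') m (sqrt_pos s')).
    assert (Hr' := pow_le (sqrt s') (pred m) (sqrt_pos s')).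
    eapply Rle_trans.
    { apply (oscillatory_integral_bound F xi s s' (A * sqrt s' ^ m) (A * sqrt s' ^ pred m));
        auto; try lra; try (apply Rmult_le_pos; lra).
      - intros u Hu; apply (regular_le_at F m A u s'); auto; lra.
      - intros u v Huv Hv; rewrite (Rmult_comm (A * _)), <- Rmult_assoc, (Rmult_comm _ A).
        apply regular_increment_le; auto; lra. }
    assert (Hk := sqrt_mul_pow_pred_le (s' - s) s' m ltac:(lra) Hs').
    assert (0 <= 3 * weight xi * sqrt (s' - s)) by (assert (Hq := sqrt_pos (s' - s)); nra).
    replace (sqrt (s' - s) * (A * sqrt s' ^ pred m))
      with (A * (sqrt (s' - s) * sqrt s' ^ pred m)) by ring.
    assert (A * (sqrt (s' - s) * sqrt s' ^ pred m) <= A * sqrt s' ^ m)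
      by (apply Rmult_le_compat_l; lra).
    assert (E : 6 * weight xi * A * sqrt (s' - s) * sqrt s' ^ m
                = 3 * weight xi * sqrt (s' - s) * (2 * (A * sqrt s' ^ m))) by ring.
    rewrite E; apply Rmult_le_compat_l; lra. }
  split; [| exact Hinc].
  intros s Hs.
  assert (H0 : CRInt (oscillatory xi F) 0 0 = (0, 0))
    by apply (RInt_point (V := C_R_CompleteNormedModule)).
  specialize (Hinc 0 s ltac:(lra) ltac:(lra)); rewrite H0, Rminus_0_r in Hinc.
  replace (Cminus (CRInt (oscillatory xi F) 0 s) (0, 0)) with (CRInt (oscillatory xi F) 0 s) in Hinc
    by (destruct (CRInt (oscillatory xi F) 0 s); unfold Cminus, Cplus, Copp; cbn; f_equal; ring).
  simpl; rewrite <- Rmult_assoc; exact Hinc.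
Qed.

(* 18 = 3 * 6, the constants of [regular_triple] and [regular_oscillatory_integral]. *)
Definition D : R := 18.

Definition triple (a b c : ltree) (u : R) : C := Cmul (I_T a u) (Cmul (I_T b u) (I_T c u)).

Lemma I_T_node (z : Z) (a b c : ltree) (t : R) :
  I_T (LNode z a b c) t
  = Cint (oscillatory (IZR (sigma (lab a) (lab b) (lab c))) (triple a b c)) 0 t.
Proof. reflexivity. Qed.

Lemma ccontinuous_I_T (T : ltree) : ccontinuous (I_T T).
Proof.
  induction T as [z | z a IHa b IHb c IHc].
  - split; intros x; apply continuous_const.
  - set (xi := IZR (sigma (lab a) (lab b) (lab c))).
    assert (Hg : ccontinuous (oscillatory xi (triple a b c))).
    { apply ccontinuous_oscillatory; unfold triple.
      apply ccontinuous_Cmul; [| apply ccontinuous_Cmul]; assumption. }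
    assert (E : forall t, I_T (LNode z a b c) t = CRInt (oscillatory xi (triple a b c)) 0 t).
    { intros t; rewrite I_T_node; apply Cint_CRInt, Hg. }
    destruct (ccontinuous_CRInt _ Hg) as [g1 g2].
    split; intros x; eapply continuous_ext; try (intros t; rewrite E; reflexivity); auto.
Qed.

Lemma regular_I_T (T : ltree) : regular (I_T T) (n_int T) (D ^ n_int T * sigma_weight T).
Proof.
  induction T as [z | z a IHa b IHb c IHc].
  - assert (E1 : Cmod (1, 0) = 1).
    { unfold Cmod; cbn [fst snd]; replace (1 ^ 2 + 0 ^ 2) with 1 by ring; apply sqrt_1. }
    assert (E0 : Cmod (Cminus (1, 0) (1, 0)) = 0).
    { unfold Cmod, Cminus, Cplus, Copp; cbn [fst snd]; rewrite <- sqrt_0; f_equal; ring. }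
    split; cbn [I_T n_int sigma_weight]; intros s *; rewrite ?E1, ?E0; simpl.
    + lra.
    + intros _ _; rewrite !Rmult_1_l, Rmult_1_r; apply sqrt_pos.
  - set (xi := IZR (sigma (lab a) (lab b) (lab c))).
    assert (Htriple := regular_triple _ _ _ _ _ _ _ _ _ IHa IHb IHc).
    assert (Hcont : ccontinuous (triple a b c)).
    { unfold triple; apply ccontinuous_Cmul; [| apply ccontinuous_Cmul]; apply ccontinuous_I_T. }
    apply (regular_ext (fun t => CRInt (oscillatory xi (triple a b c)) 0 t)).
    { intros t; rewrite I_T_node; symmetry; apply Cint_CRInt, ccontinuous_oscillatory, Hcont. }
    replace (D ^ n_int (LNode z a b c) * sigma_weight (LNode z a b c))
      with (6 * weight xi * (3 * (D ^ n_int a * sigma_weight a) * (D ^ n_int b * sigma_weight b)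
                           * (D ^ n_int c * sigma_weight c)))
      by (cbn [n_int sigma_weight pow]; rewrite !pow_add; unfold weight, xi, D; ring).
    apply regular_oscillatory_integral; assumption.
Qed.

Theorem lemma3p2 :
  exists C : R,
    forall (T : ltree) (t : R),
      inJ T -> 0 <= t <= 1 ->
      Cmod (I_T T t) <= sqrt (C * t) ^ (n_int T) * sigma_weight T.
Proof.
  exists (D * D); intros T t _ Ht.
  destruct (regular_I_T T) as [Hsup _].
  rewrite sqrt_mult, sqrt_square, Rpow_mult_distr by (unfold D; lra).
  eapply Rle_trans; [apply Hsup, Ht |]; right; ring.
Qed.
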